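(* Let $E$ be a real Hilbert space, $C\subseteq E$ nonempty closed convex, $\rho=\sup_{x,y\in C}\lVert x-y\rVert\in[0,+\infty]$, $a\in C$, $0<\theta_1\leqslant\theta_2\leqslant\dots\leqslant\theta_T$, and $\widehat{x}_t^*\in E$ arbitrary predictions. Suppose the learner plays $\widetilde{x}_t=P_C\big(a-\sum_{i=1}^{t-1}\theta_ix_i^*\big)$, $x_t=P_C\big(\widetilde{x}_t-\theta_t\widehat{x}_t^*\big)$. Then for all $z_1,\dots,z_T\in C$, \[\mathrm{Regret}(z_1,\dots,z_T)\leqslant\frac1{2\theta_1}\lVert z_1-a\rVert^2+\sum_{t=2}^T\frac1{\theta_t}\Big\lVert z_t-a+\sum_{i=1}^{t-1}\theta_ix_i^*\Big\rVert\,\lVert z_t-z_{t-1}\rVert+\sum_{t=1}^T\frac1{\theta_t}Q_\rho^\star\big(\theta_t\lVert x_t^*-\widehat{x}_t^*\rVert\big)-\sum_{t=1}^T\frac1{2\theta_t}\lVert x_t-\widetilde{x}_t\rVert^2,\] and also \[\mathrm{Regret}(z_1,\dots,z_T)\leqslant\frac1{2\theta_1}\lVert z_1-a\rVert^2+\sum_{t=2}^T\frac1{\theta_t}\Big\lVert z_t-a+\sum_{i=1}^{t-1}\theta_ix_i^*\Big\rVert\,\lVert z_t-z_{t-1}\rVert+\sum_{t=1}^T\frac1{\theta_t}\Phi_{\theta_t}(x_t^*,\widehat{x}_t^* )-\sum_{t=1}^T\frac1{2\theta_t}\lVert y_t-\widetilde{x}_t\rVert^2,\] where $y_t=P_C\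big(\widetilde{x}_t-\theta_t\widehat{y}_t^*\big)$.
   Context: $P_C$ is the metric projection onto $C$. Protocol: at rounds $t=1,\dots,T$ the learner plays $x_t\in C$, the adversary reveals a proper $\varphi_t\colon E\to(-\infty,+\infty]$ with $C\subseteq\operatorname{dom}\partial\varphi_t$, and $x_t^*\in\partial\varphi_t(x_t)$ (usual subdifferential, $E$ identified with its dual). $\mathrm{Regret}(z_1,\dots,z_T)=\sum_t\varphi_t(x_t)-\sum_t\varphi_t(z_t)$. $Q_\rho^\star(\varkappa)=\frac12\varkappa^2-\frac12(\lvert\varkappa\rvert-\rho)_+^2$ (with $Q_\infty^\star(\varkappa)=\frac12\varkappa^2$), $x_+=\max\{x,0\}$. $\widehat{y}_t^*=\lambda\widehat{x}_t^*+(1-\lambda)x_t^*$, $\lambda=\min\{\lVert x_t^*\rVert/\lVert x_t^*-\widehat{x}_t^*\rVert,1\}$ (any $\lambda$ if $x_t^*=\widehat{x}_t^*$). For $\xi>0$: $\Phi_\xi(x^*,\widehat{x}^* )=Q_\rho^\star\big(\xi\min\{\lVert x^*-\widehat{x}^*\rVert,\lVert x^*\rVert\}\big)+\xi\lVert x^*\rVert\min\{\xi(\lVert x^*-\widehat{x}^*\rVert-\lVert x^*\rVert)_+,\rho\}$. *)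

From HB Require Import structures.
From mathcomp Require Import all_boot all_order all_algebra.
From mathcomp Require Import all_classical all_reals all_analysis.
Set Implicit Arguments. Unset Strict Implicit. Unset Printing Implicit Defensive.
Import Order.TTheory GRing.Theory Num.Theory.
Import numFieldNormedType.Exports.
Local Open Scope classical_set_scope.
Local Open Scope ring_scope.

Section Defs.
Variables (R : realType) (E : normedModType R).

(* ip is an inner product on E inducing the norm of E:
   symmetric, linear in the first argument, and <x,x> = |x|^2.
   Together with completeness of E this makes E a real Hilbert space. *)
Definition is_inner_product (ip : E -> E -> R) : Prop :=
  [/\ (forall x y, ip x y = ip y x),
      (forall (a : R) x y z, ip (a *: x + y) z = a * ip x z + ip y z) &
      (forall x, ip x x = `|x| ^+ 2)].

(* metric projection onto C (nearest point; unique for C nonempty closed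
   convex in a Hilbert space) *)
Definition proj (C : set E) (x : E) : E :=
  xget 0 [set p | C p /\ forall c, C c -> `|x - p| <= `|x - c|].

Definition diam (C : set E) : \bar R :=
  ereal_sup [set r | exists x y, [/\ C x, C y & r = (`|x - y|)%:E]].

Definition proper_fun (phi : E -> \bar R) : Prop :=
  (forall x, phi x <> -oo%E) /\ (exists x, phi x <> +oo%E).

Definition subdiff (ip : E -> E -> R) (phi : E -> \bar R) (x xs : E) : Prop :=
  (exists r : R, phi x = r%:E) /\
  (forall y, (phi x + (ip xs (y - x))%:E <= phi y)%E).

Definition dom_subdiff (ip : E -> E -> R) (phi : E -> \bar R) : set E :=
  [set x | exists xs, subdiff ip phi x xs].

Definition Qstar (rho : \bar R) (k : R) : R :=
  match rho with
  | EFin r => k ^+ 2 / 2 - (Num.max (`|k| - r) 0) ^+ 2 / 2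
  | _ => k ^+ 2 / 2
  end.

Definition min_rho (rho : \bar R) (a : R) : R :=
  match rho with
  | EFin r => Num.min a r
  | _ => a
  end.

Definition Phi (rho : \bar R) (xi : R) (xs xh : E) : R :=
  Qstar rho (xi * Num.min `|xs - xh| `|xs|)
  + xi * `|xs| * min_rho rho (xi * Num.max (`|xs - xh| - `|xs|) 0).

(* lambda = min{|xs|/|xs - xh|, 1}; arbitrary (here 1) when xs = xh *)
Definition lam (xs xh : E) : R :=
  if xs == xh then 1 else Num.min (`|xs| / `|xs - xh|) 1.

Definition yhat (xs xh : E) : E := lam xs xh *: xh + (1 - lam xs xh) *: xs.

(* learner: xtilde_t = P_C(a - sum_{i<t} theta_i xs_i),
            x_t = P_C(xtilde_t - theta_t xh_t)   (0-based rounds) *)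
Definition xtilde (C : set E) (a : E) (theta : nat -> R) (xs : nat -> E)
  (t : nat) : E := proj C (a - \sum_(0 <= i < t) theta i *: xs i).

Definition xplay (C : set E) (a : E) (theta : nat -> R) (xs xh : nat -> E)
  (t : nat) : E := proj C (xtilde C a theta xs t - theta t *: xh t).

Definition yplay (C : set E) (a : E) (theta : nat -> R) (xs xh : nat -> E)
  (t : nat) : E := proj C (xtilde C a theta xs t - theta t *: yhat (xs t) (xh t)).

End Defs.

(* Both bounds come from one inequality per round.  With
   u_t = a - sum_(i<t) theta_i x_i^*, so that xtilde_t = P_C u_t, the potential
   proj_gap u z = (|z - u|^2 - |P_C u - u|^2) / 2 measures how far z is from
   solving the proximal problem that defines P_C u.  The variational
   inequalities of the projections defining xtilde_(t+1) and the played point,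
   Cauchy-Schwarz, and the Fenchel-Young inequality for Q_rho (applied to a
   distance between two points of C, hence at most rho) bound
   theta_t <x_t^*, x_t - z> by Q_rho^*(theta_t |x_t^* - xhat_t^*|)
   - |x_t - xtilde_t|^2 / 2 plus the drop of the potential.  For Phi the same
   step is taken against yhat_t^*, and x_t differs from y_t by at most
   theta_t |yhat_t^* - xhat_t^*| since P_C is nonexpansive.  Dividing by theta_t
   and summing, the potential drops telescope because 1/theta_t decreases,
   leaving the initial term and the drift |z_t - u_t| |z_t - z_(t-1)|; the
   subgradient inequality turns the regret into the linearized sum.  P_C is
   well defined because, by the parallelogram law, minimizing sequences are
   Cauchy. *)

From Pilot Require Import Defs.
From HB Require Import structures.
From mathcomp Require Import all_boot all_order all_algebra.
From mathcomp Require Import all_classical all_reals all_analysis.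
From mathcomp Require Import lra ring.
Import Order.TTheory GRing.Theory Num.Theory.
Import numFieldNormedType.Exports.
Local Open Scope classical_set_scope.
Local Open Scope ring_scope.
Set Implicit Arguments. Unset Strict Implicit. Unset Printing Implicit Defensive.

(* mathcomp_extra, imported after Defs, exports another [proj] *)
Local Notation proj := Defs.proj.

Section InnerProduct.
Variables (R : realType) (E : normedModType R) (ip : E -> E -> R).
Hypothesis ipE : is_inner_product ip.

Lemma ipC x y : ip x y = ip y x. Proof. by case: ipE. Qed.

Lemma ipxx x : ip x x = `|x| ^+ 2. Proof. by case: ipE. Qed.

Lemma ipDl x y z : ip (x + y) z = ip x z + ip y z.
Proof. by case: ipE => _ ipl _; have := ipl 1 x y z; rewrite scale1r mul1r. Qed.

Lemma ipZl a x z : ip (a *: x) z = a * ip x z.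
Proof.
case: ipE => _ ipl _; have ip0 : ip 0 z = 0.
  by have := ipDl 0 0 z; rewrite addr0; lra.
by rewrite -[a *: x]addr0 ipl ip0 addr0.
Qed.

Lemma ipNl x z : ip (- x) z = - ip x z.
Proof. by rewrite -scaleN1r ipZl mulN1r. Qed.

Lemma ipDr x y z : ip z (x + y) = ip z x + ip z y.
Proof. by rewrite ipC ipDl !(ipC z). Qed.

Lemma ipZr a x z : ip z (a *: x) = a * ip z x.
Proof. by rewrite ipC ipZl ipC. Qed.

Lemma ipNr x z : ip z (- x) = - ip z x.
Proof. by rewrite ipC ipNl ipC. Qed.

End InnerProduct.

(* Rewrites squared norms and inner products of linear combinations into inner
   products of atoms, each unordered pair in one orientation, for lra/ring. *)
Ltac ip_expand ipE :=
  lazymatch type of ipE with is_inner_product ?ip =>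
  rewrite -?(ipxx ipE) ?(ipDl ipE, ipDr ipE, ipNl ipE, ipNr ipE, ipZl ipE, ipZr ipE);
  repeat match goal with
  | |- context [ip ?a ?b] =>
      match goal with |- context [ip b a] =>
        tryif constr_eq a b then fail else rewrite [ip b a](ipC ipE b a) end
  end end.

Section InnerProductNorm.
Variables (R : realType) (E : normedModType R) (ip : E -> E -> R).
Hypothesis ipE : is_inner_product ip.

Lemma sqr_normB x y : `|x - y| ^+ 2 = `|x| ^+ 2 - 2 * ip x y + `|y| ^+ 2.
Proof. by ip_expand ipE; ring. Qed.

Lemma ip_le_normM x y : ip x y <= `|x| * `|y|.
Proof.
have rev_tri : (`|x| - `|y|) ^+ 2 <= `|x - y| ^+ 2.
  by rewrite -real_normK ?num_real // lerXn2r ?nnegrE // ler_dist_dist.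
move: rev_tri; rewrite sqr_normB; lra.
Qed.

End InnerProductNorm.

Lemma convex_setP (R : numDomainType) (M : lmodType R) (C : set M) (s : R) x y :
  convex_set C -> 0 <= s -> s <= 1 -> C x -> C y -> C (s *: x + (1 - s) *: y).
Proof.
move=> convC s0 s1 Cx Cy.
have s01 : Itv.spec (@Itv.num_sem R) (Itv.Real `[0%Z, 1%Z]) s.
  by rewrite /Itv.num_sem /= in_itv /= s0 s1 ger0_real.
by have := convC x y (Itv.mk s01); rewrite !inE => /(_ Cx Cy).
Qed.

Section NearestPoint.
Variables (R : realType) (E : normedModType R) (ip : E -> E -> R).
Hypothesis ipE : is_inner_product ip.
Variable C : set E.
Hypothesis convC : convex_set C.

Definition nearest (x : E) : set E :=
  [set p | C p /\ forall c, C c -> `|x - p| <= `|x - c|].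

Lemma nearest_ip_le0 x p c : nearest x p -> C c -> ip (x - p) (c - p) <= 0.
Proof.
move=> [Cp p_min] Cc; rewrite leNgt; apply/negP => k_gt0.
set k := ip (x - p) (c - p) in k_gt0; set N := `|c - p| ^+ 2.
(* if k > 0, stepping from p towards c by s gets strictly closer to x *)
set s := k / (N + k).
have N_ge0 : 0 <= N by exact: sqr_ge0.
have s_gt0 : 0 < s by apply: divr_gt0; lra.
have s_le1 : s <= 1 by rewrite ler_pdivrMr; lra.
have sNk : s * (N + k) = k by rewrite divfK //; apply/eqP; lra.
have move_dist : `|x - (s *: c + (1 - s) *: p)| ^+ 2 = `|x - p| ^+ 2 - 2 * s * k + s ^+ 2 * N.
  by rewrite /k /N; ip_expand ipE; ring.
have := p_min _ (convex_setP convC (ltW s_gt0) s_le1 Cc Cp).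
rewrite -(ler_pXn2r (_ : 0 < 2)%N) ?nnegrE // move_dist.
have : 0 < s * k by exact: mulr_gt0.
nra.
Qed.

Lemma sqr_normB_le_excess x d c1 c2 : (forall c, C c -> d <= `|x - c| ^+ 2) ->
  C c1 -> C c2 ->
  `|c1 - c2| ^+ 2 <= 2 * (`|x - c1| ^+ 2 - d) + 2 * (`|x - c2| ^+ 2 - d).
Proof.
move=> d_lb Cc1 Cc2.
have /d_lb mid : C (2^-1 *: c1 + (1 - 2^-1) *: c2).
  by apply: convex_setP => //; rewrite ?invr_ge0 ?invf_le1 ?ler0n ?ler1n.
move: mid; rewrite (_ : 1 - 2^-1 = 2^-1 :> R); last by field.
ip_expand ipE; lra.
Qed.

End NearestPoint.

Lemma Qstar_young (R : realType) (rho : \bar R) (k d : R) :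
  0 <= k -> 0 <= d -> (d%:E <= rho)%E -> k * d <= d ^+ 2 / 2 + Qstar rho k.
Proof.
move=> k_ge0 d_ge0; case: rho => [r | | //] /=; rewrite ?lee_fin => d_le; last first.
  by have := sqr_ge0 (k - d); lra.
rewrite ger0_norm //; have [k_le | k_gt] := lerP k r.
  by rewrite max_r ?subr_le0 // expr0n /= mul0r subr0; have := sqr_ge0 (k - d); lra.
rewrite max_l; last by rewrite subr_ge0 ltW.
have : 0 <= (r - d) * (k - r) by apply: mulr_ge0; lra.
by have := sqr_ge0 (r - d); lra.
Qed.

Lemma le_min_rho (R : realType) (rho : \bar R) (v d : R) :
  d <= v -> (d%:E <= rho)%E -> d <= min_rho rho v.
Proof. by case: rho => [r | | //] //= d_le_v; rewrite lee_fin le_min d_le_v. Qed.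

Lemma diam_ge (R : realType) (E : normedModType R) (C : set E) c c' :
  C c -> C c' -> (`|c - c'|%:E <= diam C)%E.
Proof. by move=> Cc Cc'; apply: ereal_sup_ubound; exists c, c'. Qed.

Section OptimisticDirection.
Variables (R : realType) (E : normedModType R).

Lemma sub_yhat (g h : E) : g - yhat g h = lam g h *: (g - h).
Proof.
rewrite /yhat scalerBr scalerBl scale1r opprD opprB addrCA [g + _]addrC subrK.
by rewrite addrC.
Qed.

Lemma yhat_sub (g h : E) : yhat g h - h = (1 - lam g h) *: (g - h).
Proof. by rewrite scalerBl scale1r -sub_yhat [RHS]addrC opprB addrA subrK. Qed.

Lemma norm_sub_yhat (g h : E) : `|g - yhat g h| = Num.min `|g - h| `|g|.
Proof.
rewrite sub_yhat normrZ /lam; case: eqP => [-> | /eqP gh].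
  by rewrite subrr normr0 mulr0 min_l.
have gh_gt0 : 0 < `|g - h| by rewrite normr_gt0 subr_eq0.
have [g_le | g_gt] := lerP `|g| `|g - h|.
  rewrite min_l ?ler_pdivrMr ?mul1r // ger0_norm ?divr_ge0 //.
  by rewrite divfK ?gt_eqF.
by rewrite min_r ?ler_pdivlMr ?mul1r ?ltW // normr1 mul1r.
Qed.

Lemma norm_yhat_sub (g h : E) : `|yhat g h - h| = Num.max (`|g - h| - `|g|) 0.
Proof.
rewrite yhat_sub normrZ /lam; case: eqP => [-> | /eqP gh].
  by rewrite !subrr !normr0 mul0r sub0r max_r // oppr_le0.
have gh_gt0 : 0 < `|g - h| by rewrite normr_gt0 subr_eq0.
have [g_le | g_gt] := lerP `|g| `|g - h|.
  rewrite min_l ?ler_pdivrMr ?mul1r // ger0_norm ?subr_ge0 ?ler_pdivrMr ?mul1r //.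
  by rewrite mulrBl mul1r divfK ?gt_eqF // max_l // subr_ge0.
by rewrite min_r ?ler_pdivlMr ?mul1r ?ltW // subrr normr0 mul0r max_r // subr_le0 ltW.
Qed.

End OptimisticDirection.

Lemma sum_le_telescoping (R : realFieldType) (T : nat) (th L B D : nat -> R)
    (G : nat -> nat -> R) :
  (0 < T)%N -> (forall t, (t < T)%N -> 0 < th t) ->
  (forall t, (t.+1 < T)%N -> th t <= th t.+1) ->
  (forall t, (t < T)%N -> 0 <= G t.+1 t) ->
  (forall t, (t.+1 < T)%N -> G t.+1 t.+1 - G t.+1 t <= D t.+1) ->
  (forall t, (t < T)%N -> L t <= B t + (th t)^-1 * (G t t - G t.+1 t)) ->
  \sum_(0 <= t < T) L t <= (th 0%N)^-1 * G 0%N 0%N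
    + \sum_(1 <= t < T) (th t)^-1 * D t + \sum_(0 <= t < T) B t.
Proof.
move=> T_gt0 th_gt0 th_incr G_ge0 G_jump L_le.
suff partial k : (k < T)%N ->
    \sum_(0 <= t < k.+1) L t + (th k)^-1 * G k.+1 k <= (th 0%N)^-1 * G 0%N 0%N
      + \sum_(1 <= t < k.+1) (th t)^-1 * D t + \sum_(0 <= t < k.+1) B t.
  have lastT : (T.-1 < T)%N by rewrite prednK.
  have thV_ge0 : 0 <= (th T.-1)^-1 by rewrite invr_ge0 ltW ?th_gt0.
  have := mulr_ge0 thV_ge0 (G_ge0 _ lastT).
  by move: (partial _ lastT); rewrite prednK //; lra.
elim: k => [|k IH] k_lt.
  by rewrite !big_nat1 big_geq // addr0; have := L_le 0%N k_lt; lra.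
have k_lt' := ltnW k_lt; have th_k := th_gt0 k k_lt'; have th_k1 := th_gt0 k.+1 k_lt.
have weight_decr : (th k.+1)^-1 * G k.+1 k <= (th k)^-1 * G k.+1 k.
  by rewrite ler_wpM2r ?G_ge0 // lef_pV2 ?posrE ?th_incr.
rewrite !(big_nat_recr k.+1) //=.
have thV_ge0 : 0 <= (th k.+1)^-1 by rewrite invr_ge0 ltW.
have := ler_wpM2l thV_ge0 (G_jump k k_lt).
by have := IH k_lt'; have := L_le k.+1 k_lt; lra.
Qed.

Section Projection.
Variables (R : realType) (E : completeNormedModType R) (ip : E -> E -> R).
Hypothesis ipE : is_inner_product ip.
Variable C : set E.
Hypotheses (C0 : C !=set0) (closedC : closed C) (convC : convex_set C).

Lemma nearest_exists x : exists p, nearest C x p.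
Proof.
set S := [set `|x - c| ^+ 2 | c in C].
have S0 : S !=set0 by case: C0 => c Cc; exists (`|x - c| ^+ 2), c.
set d := inf S.
have d_lb c : C c -> d <= `|x - c| ^+ 2.
  by move=> Cc; apply: ge_inf; [exists 0 => _ [y _ <-]; exact: sqr_ge0 | exists c].
have approx n : exists c, C c /\ `|x - c| ^+ 2 < d + n.+1%:R^-1.
  have /(inf_lt S0)[_ [c Cc <-] lt_c] : d < d + n.+1%:R^-1.
    by rewrite ltrDl invr_gt0 ltr0Sn.
  by exists c.
have [u uP] := choice approx.
have u_close n m : `|u n - u m| ^+ 2 <= 2 * (n.+1%:R^-1 + m.+1%:R^-1).
  have [[Cn ltn] [Cm ltm]] := (uP n, uP m).
  have := sqr_normB_le_excess ipE convC d_lb Cn Cm.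
  by move: ltn ltm; move: (n.+1%:R^-1) (m.+1%:R^-1) => en em; lra.
have /cauchy_cvg u_cvg : cauchy (u @ \oo).
  apply: cauchy_exP => e e_gt0.
  have q_gt0 : 0 < e ^+ 2 / 4 by apply: divr_gt0; [exact: exprn_gt0 | lra].
  have [N _ NP] := near_infty_natSinv_lt (PosNum q_gt0).
  exists (u N), N => // n /= Nn; rewrite -ball_normE /ball_ /=.
  have n_le_N : n.+1%:R^-1 <= N.+1%:R^-1 :> R.
    by rewrite lef_pV2 ?posrE ?ltr0Sn // ler_nat ltnS.
  have := NP N (leqnn N); rewrite /= => N_small.
  rewrite -(ltr_pXn2r (_ : 0 < 2)%N) ?nnegrE ?(ltW e_gt0) //.
  apply: le_lt_trans (u_close N n) _.
  by move: n_le_N N_small; move: (n.+1%:R^-1) (N.+1%:R^-1) => en eN; lra.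
exists (limn u); split.
  apply: (closed_cvg C closedC) u_cvg.
  by apply: nearW => n; exact: (uP n).1.
move=> c Cc; rewrite -(ler_pXn2r (_ : 0 < 2)%N) ?nnegrE //.
apply: le_trans (d_lb c Cc); apply/ler_addgt0Pr => e e_gt0.
have dist_cvg : (`|x - u n| ^+ 2 @[n --> \oo]) --> `|x - limn u| ^+ 2.
  by rewrite expr2; apply: cvgM; apply: cvg_norm; apply: cvgB => //; exact: cvg_cst.
apply: (cvgr_to_le dist_cvg); near=> n.
apply: ltW; apply: lt_le_trans (uP n).2 _; rewrite lerD2l ltW //.
by near: n; exact: (near_infty_natSinv_lt (PosNum e_gt0)).
Unshelve. all: by end_near.
Qed.

Lemma projP x : nearest C x (proj C x).
Proof.
rewrite /proj; case: xgetP => // none.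
by have [p near_p] := nearest_exists x; have := none p.
Qed.

Lemma proj_mem x : C (proj C x).
Proof. by case: (projP x). Qed.

Lemma proj_ip_le0 x c : C c -> ip (x - proj C x) (c - proj C x) <= 0.
Proof. exact/nearest_ip_le0/projP. Qed.

Lemma proj_id c : C c -> proj C c = c.
Proof.
move=> Cc; have [_ /(_ c Cc)] := projP c.
by rewrite subrr normr0 normr_le0 subr_eq0 => /eqP <-.
Qed.

Lemma proj_nonexpansive x y : `|proj C x - proj C y| <= `|x - y|.
Proof.
have vix := proj_ip_le0 x (proj_mem y); have viy := proj_ip_le0 y (proj_mem x).
have cs := ip_le_normM ipE (x - y) (proj C x - proj C y).
have : `|proj C x - proj C y| ^+ 2 <= `|x - y| * `|proj C x - proj C y|.
  by move: vix viy cs; ip_expand ipE; lra.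
by have := normr_ge0 (proj C x - proj C y); have := normr_ge0 (x - y); nra.
Qed.

Definition proj_gap (u z : E) : R := (`|z - u| ^+ 2 - `|proj C u - u| ^+ 2) / 2.

Lemma proj_gap_ge0 u z : C z -> 0 <= proj_gap u z.
Proof.
move=> Cz; have [_ /(_ z Cz)] := projP u; rewrite /proj_gap !(distrC u).
by have := normr_ge0 (proj C u - u); nra.
Qed.

Lemma proj_gap_sub_le u z z' : proj_gap u z - proj_gap u z' <= `|z - u| * `|z - z'|.
Proof.
have := ip_le_normM ipE (z - u) (z - z'); have := sqr_ge0 `|z - z'|.
by rewrite /proj_gap; ip_expand ipE; lra.
Qed.

Lemma optimistic_step u X H z : C z ->
  ip X (proj C (proj C u - H) - z) <=
    Qstar (diam C) `|X - H| - `|proj C (proj C u - H) - proj C u| ^+ 2 / 2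
    + (proj_gap u z - proj_gap (u - X) z).
Proof.
move=> Cz; set p := proj C u; set p' := proj C (u - X); set w := proj C (p - H).
have vi_p : ip (u - p) (p' - p) <= 0 by apply/proj_ip_le0/proj_mem.
have vi_w : ip (p - H - w) (p' - w) <= 0 by apply/proj_ip_le0/proj_mem.
have cauchy_schwarz := ip_le_normM ipE (X - H) (w - p').
have young := Qstar_young (normr_ge0 (X - H)) (normr_ge0 (w - p'))
  (diam_ge (proj_mem _) (proj_mem _)).
by move: vi_p vi_w cauchy_schwarz young; rewrite /proj_gap; ip_expand ipE; lra.
Qed.

Lemma round_bound_Qstar th u g h z : 0 < th -> C z ->
  ip g (proj C (proj C u - th *: h) - z) <=
    th^-1 * Qstar (diam C) (th * `|g - h|)
    - th^-1 / 2 * `|proj C (proj C u - th *: h) - proj C u| ^+ 2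
    + th^-1 * (proj_gap u z - proj_gap (u - th *: g) z).
Proof.
move=> th_gt0 Cz; have := optimistic_step u (th *: g) (th *: h) Cz.
rewrite (ipZl ipE) -scalerBr normrZ gtr0_norm // -ler_pdivlMl //; lra.
Qed.

Lemma round_bound_Phi th u g h z : 0 < th -> C z ->
  ip g (proj C (proj C u - th *: h) - z) <=
    th^-1 * Phi (diam C) th g h
    - th^-1 / 2 * `|proj C (proj C u - th *: yhat g h) - proj C u| ^+ 2
    + th^-1 * (proj_gap u z - proj_gap (u - th *: g) z).
Proof.
move=> th_gt0 Cz; set x := proj C (_ - th *: h); set y := proj C (_ - th *: yhat g h).
have := optimistic_step u (th *: g) (th *: yhat g h) Cz.
rewrite -/y (ipZl ipE) -scalerBr normrZ gtr0_norm // norm_sub_yhat => step.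
have xy_le : `|x - y| <= min_rho (diam C) (th * Num.max (`|g - h| - `|g|) 0).
  apply: le_min_rho; last exact: diam_ge (proj_mem _) (proj_mem _).
  apply: le_trans (proj_nonexpansive _ _) _.
  by rewrite opprB addrC addrA subrK -scalerBr normrZ gtr0_norm // norm_yhat_sub.
have xy_ip : ip g (x - y) <= `|g| * min_rho (diam C) (th * Num.max (`|g - h| - `|g|) 0).
  exact: le_trans (ip_le_normM ipE g _) (ler_wpM2l (normr_ge0 g) xy_le).
have split_xz : ip g (x - z) = ip g (y - z) + ip g (x - y) by ip_expand ipE; lra.
move: step; rewrite -ler_pdivlMl // => step.
rewrite split_xz /Phi mulrDr -[th * _ * _]mulrA mulKf ?gt_eqF //; lra.
Qed.

Lemma lazy_projection_telescoping (a : E) (T : nat) (theta : nat -> R)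
    (g z : nat -> E) (L B : nat -> R) :
  let u t := a - \sum_(0 <= i < t) theta i *: g i in
  C a -> (0 < T)%N -> (forall t, (t < T)%N -> 0 < theta t) ->
  (forall t, (t.+1 < T)%N -> theta t <= theta t.+1) ->
  (forall t, (t < T)%N -> C (z t)) ->
  (forall t, (t < T)%N ->
     L t <= B t + (theta t)^-1 * (proj_gap (u t) (z t) - proj_gap (u t.+1) (z t))) ->
  \sum_(0 <= t < T) L t <= (theta 0%N)^-1 / 2 * `|z 0%N - a| ^+ 2
    + \sum_(1 <= t < T) (theta t)^-1
        * `|z t - a + \sum_(0 <= i < t) theta i *: g i| * `|z t - z t.-1|
    + \sum_(0 <= t < T) B t.
Proof.
move=> u Ca T_gt0 theta_gt0 theta_incr Cz L_le.
have -> : (theta 0%N)^-1 / 2 * `|z 0%N - a| ^+ 2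
    = (theta 0%N)^-1 * proj_gap (u 0%N) (z 0%N).
  by rewrite /proj_gap /u big_geq // subr0 proj_id // subrr normr0 expr0n /=; ring.
have -> : \sum_(1 <= t < T) (theta t)^-1
    * `|z t - a + \sum_(0 <= i < t) theta i *: g i| * `|z t - z t.-1|
    = \sum_(1 <= t < T) (theta t)^-1 * (`|z t - u t| * `|z t - z t.-1|).
  by apply: eq_bigr => t _; rewrite /u opprB addrCA addrC mulrA.
exact: (sum_le_telescoping (G := fun t s => proj_gap (u t) (z s)))
  T_gt0 theta_gt0 theta_incr (fun t tT => proj_gap_ge0 (u t.+1) (Cz t tT))
  (fun t _ => proj_gap_sub_le (u t.+1) (z t.+1) (z t)) L_le.
Qed.

End Projection.

Lemma regret_le_linearized (R : realType) (E : normedModType R) (ip : E -> E -> R)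
    (T : nat) (phi : nat -> E -> \bar R) (x z g : nat -> E) :
  is_inner_product ip ->
  (forall t, (t < T)%N -> subdiff ip (phi t) (x t) (g t)) ->
  (forall t, (t < T)%N -> dom_subdiff ip (phi t) (z t)) ->
  (\sum_(0 <= t < T) phi t (x t) - \sum_(0 <= t < T) phi t (z t)
    <= (\sum_(0 <= t < T) ip (g t) (x t - z t))%:E)%E.
Proof.
move=> ipE gP zP.
have fin_x t : (t < T)%N -> phi t (x t) = (fine (phi t (x t)))%:E.
  by move=> /gP[[r ->]].
have fin_z t : (t < T)%N -> phi t (z t) = (fine (phi t (z t)))%:E.
  by move=> /zP[g' [[r ->]]].
rewrite (eq_big_nat _ _ (fun t tT => fin_x t (andP tT).2)).
rewrite (eq_big_nat _ _ (fun t tT => fin_z t (andP tT).2)).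
rewrite !sumEFin -EFinB lee_fin -sumrB; apply: ler_sum_nat => t /andP[_ tT].
have [_ /(_ (z t))] := gP t tT; rewrite fin_x // fin_z // -EFinD lee_fin.
by ip_expand ipE; lra.
Qed.

Unset Implicit Arguments.
Theorem corollary5 (R : realType) (E : completeNormedModType R)
  (ip : E -> E -> R) (hip : is_inner_product ip)
  (C : set E) (hC0 : C !=set0) (hCcl : closed C) (hCcv : convex_set C)
  (a : E) (ha : C a) (T : nat) (hT : (0 < T)%N)
  (theta : nat -> R) (htheta0 : 0 < theta 0%N)
  (htheta : forall t, (t.+1 < T)%N -> theta t <= theta t.+1)
  (phi : nat -> E -> \bar R) (xs xh : nat -> E)
  (hphi : forall t, (t < T)%N -> proper_fun (phi t))
  (hdom : forall t, (t < T)%N -> C `<=` dom_subdiff ip (phi t))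
  (hxs : forall t, (t < T)%N ->
     subdiff ip (phi t) (xplay C a theta xs xh t) (xs t))
  (z : nat -> E) (hz : forall t, (t < T)%N -> C (z t)) :
  let rho := diam C in
  let x := xplay C a theta xs xh in
  let xt := xtilde C a theta xs in
  let y := yplay C a theta xs xh in
  let regret := (\sum_(0 <= t < T) phi t (x t) - \sum_(0 <= t < T) phi t (z t))%E in
  let common := (theta 0%N)^-1 / 2 * `|z 0%N - a| ^+ 2
     + \sum_(1 <= t < T) (theta t)^-1
         * `|z t - a + \sum_(0 <= i < t) theta i *: xs i| * `|z t - z t.-1| in
  (regret <= (common
     + \sum_(0 <= t < T) (theta t)^-1 * Qstar rho (theta t * `|xs t - xh t|)
     - \sum_(0 <= t < T) (theta t)^-1 / 2 * `|x t - xt t| ^+ 2)%:E)%E /\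
  (regret <= (common
     + \sum_(0 <= t < T) (theta t)^-1 * Phi rho (theta t) (xs t) (xh t)
     - \sum_(0 <= t < T) (theta t)^-1 / 2 * `|y t - xt t| ^+ 2)%:E)%E.
Proof.
move=> rho x xt y regret common.
have theta_gt0 t : (t < T)%N -> 0 < theta t.
  by elim: t => [//|t IH] tT; apply: lt_le_trans (IH (ltnW tT)) (htheta t tT).
have linearized : (regret <= (\sum_(0 <= t < T) ip (xs t) (x t - z t))%:E)%E.
  by apply: regret_le_linearized => // t tT; apply: hdom (hz t tT).
split; apply: le_trans linearized _; rewrite lee_fin -addrA -sumrB;
  apply: (lazy_projection_telescoping hip hC0 hCcl hCcv) => // t tT;
  rewrite big_nat_recr //= opprD addrA.
- exact (round_bound_Qstar hip hC0 hCcl hCcv _ _ _ (theta_gt0 t tT) (hz t tT)).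
- exact (round_bound_Phi hip hC0 hCcl hCcv _ _ _ (theta_gt0 t tT) (hz t tT)).
Qed.
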